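(* Under the standing assumptions below, let $\{\rho_k\}$, $\{\epsilon_k\}$ be positive sequences with $\rho_k\to\infty$ and $\epsilon_k\to0$, and for each $k$ let $(x^k,y^k,\lambda^k,z^k)\in\mathcal X\times\mathcal Y\times\Lambda\times\mathcal Y$ be an $\epsilon_k$-optimal solution of $\min_{x\in\mathcal X}\max_{y\in\mathcal Y,\lambda\in\Lambda}\min_{z\in\mathcal Y}P_{\rho_k}(x,y,\lambda,z)$. Then every accumulation point $(x_\infty,y_\infty,\lambda_\infty)$ of $\{(x^k,y^k,\lambda^k)\}$ is a global minimax point of the minimax bilevel problem, i.e. $(y_\infty,\lambda_\infty)\in\mathcal F_{\rm low}$, $x_\infty\in\arg\min_{x\in\mathcal X}\Phi(x)$, and $(y_\infty,\lambda_\infty)\in\arg\max_{(y,\lambda)\in\mathcal F_{\rm low}}f(x_\infty,y,\lambda)$.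
   Context: Standing setting. $\mathcal X\subset\mathbb R^{d_x}$, $\mathcal Y\subset\mathbb R^{d_y}$, $\Lambda\subset\mathbb R^{d_\lambda}$ are nonempty convex compact sets. $\bar f:\mathbb R^{d_x}\times\mathbb R^{d_y}\to\mathbb R$ is continuously differentiable with $\nabla\bar f$ Lipschitz on $\mathcal X\times\mathcal Y$; $A\in\mathbb R^{d_\lambda\times d_x}$, $B\in\mathbb R^{d_\lambda\times d_y}$, $c\in\mathbb R^{d_\lambda}$, and $f(x,y,\lambda):=\bar f(x,y)+\lambda^T(Ax+By-c)$. $g:\mathbb R^{d_y}\times\mathbb R^{d_\lambda}\to\mathbb R$ is continuously differentiable with $\nabla g$ Lipschitz on $\mathcal Y\times\Lambda$, and $g(\cdot,\lambda)$ is convex for each $\lambda\in\Lambda$. Definitions: $\mathcal F_{\rm low}:=\{(y,\lambda)\in\mathcal Y\times\Lambda:\ g(y,\lambda)=\min_{z\in\mathcal Y}g(z,\lambda)\}$; $P_\rho(x,y,\lambda,z):=f(x,y,\lambda)-\rho(g(y,\lambda)-g(z,\lambda))$; $F_\rho(x):=\max_{y\in\mathcal Y,\lambda\in\Lambda}\min_{z\in\mathcal Y}P_\rho(x,y,\lambda,z)$; $\Phi_\rho^*:=\min_{x\in\mathcal X}F_\rho(x)$; $\Phi(x):=\max_{(y,\lambda)\in\mathcal F_{\rm low}}f(x,y,\lambda)$. A point $(x_\epsilon,y_\epsilon,\lambda_\epsilon,z_\epsilon)\in\mathcal X\times\mathcal Y\times\Lambda\times\mathcal Y$ is an $\epsilon$-optimal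 solution of $\min_{x}\max_{y,\lambda}\min_{z}P_\rho$ if (i) $P_\rho(x_\epsilon,y_\epsilon,\lambda_\epsilon,z_\epsilon)-\min_{z\in\mathcal Y}P_\rho(x_\epsilon,y_\epsilon,\lambda_\epsilon,z)\le\epsilon$, (ii) $F_\rho(x_\epsilon)-P_\rho(x_\epsilon,y_\epsilon,\lambda_\epsilon,z_\epsilon)\le\epsilon$, and (iii) $P_\rho(x_\epsilon,y_\epsilon,\lambda_\epsilon,z_\epsilon)-\Phi_\rho^*\le\epsilon$. *)

From HB Require Import structures.
From mathcomp Require Import all_boot all_order all_algebra.
From mathcomp Require Import all_classical all_reals all_analysis.
Set Implicit Arguments. Unset Strict Implicit. Unset Printing Implicit Defensive.
Import Order.TTheory GRing.Theory Num.Theory.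
Import numFieldNormedType.Exports.
Local Open Scope classical_set_scope.
Local Open Scope ring_scope.

Section Defs.
Variable R : realType.


(* h is continuously differentiable on R^n (differentiable everywhere, with
   derivative continuous: each directional derivative p |-> 'd h p v is
   continuous; equivalent in finite dimension) and its gradient is Lipschitz
   on S (in operator norm). *)
Definition C1_LipGrad_on n (h : 'cV[R]_n -> R) (S : set 'cV[R]_n) : Prop :=
  (forall p, differentiable h p) /\
  (forall v, continuous (fun p => 'd h p v)) /\
  exists L : R, forall p q, S p -> S q -> forall v,
      `|'d h p v - 'd h q v| <= L * `|p - q| * `|v|.

Variables (dx dy dl : nat).
(* fbar is a function of (x,y), encoded on the concatenation col_mx x y;
   similarly g is a function of (y,lambda) encoded on col_mx y lambda. *)
Variables (fbar : 'cV[R]_(dx + dy) -> R) (A : 'M[R]_(dl, dx)) (B : 'M[R]_(dl, dy))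
  (c : 'cV[R]_dl) (g : 'cV[R]_(dy + dl) -> R)
  (X : set 'cV[R]_dx) (Y : set 'cV[R]_dy) (Lam : set 'cV[R]_dl).

Definition gv (y : 'cV[R]_dy) (l : 'cV[R]_dl) : R := g (col_mx y l).

Definition fv (x : 'cV[R]_dx) (y : 'cV[R]_dy) (l : 'cV[R]_dl) : R :=
  fbar (col_mx x y) + (l^T *m (A *m x + B *m y - c)) 0 0.

Definition Flow : set ('cV[R]_dy * 'cV[R]_dl) :=
  [set p | Y p.1 /\ Lam p.2 /\ gv p.1 p.2 = inf [set gv z p.2 | z in Y]].

Definition Pr (rho : R) x y l z : R := fv x y l - rho * (gv y l - gv z l).

Definition minz (rho : R) x y l : R := inf [set Pr rho x y l z | z in Y].

Definition Frho (rho : R) (x : 'cV[R]_dx) : R :=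
  sup [set minz rho x p.1 p.2 | p in Y `*` Lam].

Definition Phistar (rho : R) : R := inf [set Frho rho x | x in X].

Definition Phi (x : 'cV[R]_dx) : R := sup [set fv x p.1 p.2 | p in Flow].

Definition eps_optimal (rho eps : R) x y l z : Prop :=
  [/\ X x, Y y, Lam l & Y z] /\
  [/\ Pr rho x y l z - minz rho x y l <= eps,
       Frho rho x - Pr rho x y l z <= eps &
       Pr rho x y l z - Phistar rho <= eps].

End Defs.

From mathcomp Require Import all_boot all_order all_algebra.
From mathcomp Require Import all_classical all_reals all_analysis.
From mathcomp Require Import lra.
Import Order.TTheory GRing.Theory Num.Theory.
Import numFieldNormedType.Exports.
Local Open Scope classical_set_scope.
Local Open Scope ring_scope.

(* Only continuity of f and g and compactness matter. Write P_k for the value of P_{rho_k} at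
   the k-th eps_k-optimal point. Taking z = y_k in (i) gives P_k <= f(x_k,y_k,l_k) + eps_k;
   since the penalty vanishes on F_low, (ii) gives f(x_k,p) <= P_k + eps_k for p in F_low;
   and (i)-(ii) together bound rho_k (g(y_k,l_k) - g(z,l_k)) by 2 sup|f| + 2 eps_k. As
   rho_k -> oo the last bound puts the limit in F_low, and the first two pass to the limit to
   give the maximality of (y_oo, l_oo). For the minimality of x_oo: if
   Phi(x) < a < f(x_oo,y_oo,l_oo), then (iii) gives F_{rho_k}(x) > a for large k, and the
   (y,l) realising this satisfy f(x,y,l) >= a with penalised gap <= sup|f| - a; a cluster
   point of them lies in F_low with f(x,.) >= a > Phi(x), a contradiction. *)

Section MatrixContinuity.
Context {R : realType} {S : topologicalType}.

Lemma continuous_mx_of_entries m n (F : S -> 'M[R]_(m, n)) :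
  (forall i j, continuous (fun s => F s i j)) -> continuous F.
Proof.
move=> cF s A [P Pnbhs sPA]; rewrite /= nbhs_filterE.
apply: (filterS (fun x Px => sPA (F x) Px)).
by apply: filter_forall => i; apply: filter_forall => j; exact: cF.
Qed.

Lemma continuous_mx_entry m n (F : S -> 'M[R]_(m, n)) i j :
  continuous F -> continuous (fun s => F s i j).
Proof. by move=> cF s; exact: continuous_comp (cF s) (@coord_continuous R m n i j (F s)). Qed.

Lemma continuous_bigsum n (F : 'I_n -> S -> R) :
  (forall i, continuous (F i)) -> continuous (fun s => \sum_(i < n) F i s).
Proof.
elim: n F => [|n IHn] F cF.
  by under eq_fun do rewrite big_ord0; exact: cst_continuous.
under eq_fun do rewrite big_ord_recr /=.
by move=> s; apply: continuousD; [exact: IHn | exact: cF].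
Qed.

Lemma continuous_mulmx m n p (F : S -> 'M[R]_(m, n)) (G : S -> 'M[R]_(n, p)) :
  continuous F -> continuous G -> continuous (fun s => F s *m G s).
Proof.
move=> cF cG; apply: continuous_mx_of_entries => i j; under eq_fun do rewrite mxE.
by apply: continuous_bigsum => k s; apply: continuousM; exact: continuous_mx_entry.
Qed.

Lemma continuous_col_mx m1 m2 n (F : S -> 'M[R]_(m1, n)) (G : S -> 'M[R]_(m2, n)) :
  continuous F -> continuous G -> continuous (fun s => col_mx (F s) (G s)).
Proof.
move=> cF cG; apply: continuous_mx_of_entries => i j; under eq_fun do rewrite mxE.
by case: (fintype.split i) => k; exact: continuous_mx_entry.
Qed.

Lemma continuous_trmx m n (F : S -> 'M[R]_(m, n)) :
  continuous F -> continuous (fun s => (F s)^T).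
Proof.
move=> cF; apply: continuous_mx_of_entries => i j.
by under eq_fun do rewrite mxE; exact: continuous_mx_entry.
Qed.

End MatrixContinuity.

Lemma increasing_nat_cvg (phi : nat -> nat) :
  {homo phi : m n / (m < n)%N >-> (m < n)%N} -> phi @ \oo --> \oo.
Proof.
move=> phi_incr P [N _ NP]; exists N => // n /= Nn; apply: NP.
have idphi k : (k <= phi k)%N by elim: k => // k IHk; exact: leq_ltn_trans IHk (phi_incr _ _ _).
exact: leq_trans Nn (idphi n).
Qed.

Lemma cvg_cluster_point {T : topologicalType} {F : set_system T} {FF : ProperFilter F} {p : T} :
  F --> p -> cluster F p.
Proof. by move=> Fp A B FA /Fp FB; exact: filter_ex (filterI FA FB). Qed.

Lemma cluster_closed {T : topologicalType} {u : nat -> T} {p : T} {S : set T} :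
  cluster (u @ \oo) p -> closed S -> (\forall n \near \oo, S (u n)) -> S p.
Proof. by move=> Fp cS FS; apply: cS => B /(Fp _ _ FS). Qed.

Lemma compact_continuous_bounded {R : realType} {T : topologicalType} {K : set T} {h : T -> R} :
  compact K -> continuous h -> exists M, forall t, K t -> `|h t| <= M.
Proof.
move=> cK ch.
have [M [_ HM]] := compact_bounded (continuous_compact (continuous_subspaceT ch) cK).
by exists (M + 1) => t Kt; apply: (HM (M + 1) _ (h t)); [rewrite ltrDl | exists t].
Qed.

Lemma compact_cvg_mem {T : topologicalType} {K : set T} {u : nat -> T} {p : T} :
  hausdorff_space T -> compact K -> (forall n, K (u n)) -> u @ \oo --> p -> K p.
Proof.
by move=> hT cK Ku up; apply: (closed_cvg _ (compact_closed hT cK) _ _ up); exact: nearW.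
Qed.

Section MinimaxBilevel.
Context {R : realType} {dx dy dl : nat}.
Variables (X : set 'cV[R]_dx) (Y : set 'cV[R]_dy) (Lam : set 'cV[R]_dl)
  (fbar : 'cV[R]_(dx + dy) -> R) (A : 'M[R]_(dl, dx)) (B : 'M[R]_(dl, dy))
  (c : 'cV[R]_dl) (g : 'cV[R]_(dy + dl) -> R).
Hypotheses (Y0 : Y !=set0) (Lam0 : Lam !=set0)
  (cX : compact X) (cY : compact Y) (cLam : compact Lam)
  (fbar_cont : continuous fbar) (g_cont : continuous g).

Local Notation f := (fv fbar A B c).
Local Notation G := (gv g).
Local Notation Pr := (Pr fbar A B c g).
Local Notation minz := (minz fbar A B c g Y).
Local Notation Frho := (Frho fbar A B c g Y Lam).
Local Notation Phistar := (Phistar fbar A B c g X Y Lam).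
Local Notation Phi := (Phi fbar A B c g Y Lam).
Local Notation Flow := (Flow g Y Lam).
Local Notation eps_optimal := (eps_optimal fbar A B c g X Y Lam).

Lemma fv_continuous :
  continuous (fun t : 'cV[R]_dx * ('cV[R]_dy * 'cV[R]_dl) => f t.1 t.2.1 t.2.2).
Proof.
pose T := ('cV[R]_dx * ('cV[R]_dy * 'cV[R]_dl))%type.
have c1 : continuous (fun t : T => t.1) by move=> [? ?]; exact: cvg_fst.
have c2 : continuous (fun t : T => t.2) by move=> [? ?]; exact: cvg_snd.
have c21 : continuous (fun t : T => t.2.1).
  by move=> t; apply: continuous_comp (c2 t) _; move: t.2 => [? ?]; exact: cvg_fst.
have c22 : continuous (fun t : T => t.2.2).
  by move=> t; apply: continuous_comp (c2 t) _; move: t.2 => [? ?]; exact: cvg_snd.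
move=> t; apply: continuousD.
  apply: (continuous_comp (f := fun t : T => col_mx t.1 t.2.1)); last exact: fbar_cont.
  exact: continuous_col_mx.
apply: (@continuous_mx_entry _ _ _ _ (fun t : T => t.2.2^T *m (A *m t.1 + B *m t.2.1 - c))).
apply: continuous_mulmx; first exact: continuous_trmx.
move=> s; apply: (@continuousB R 'M[R]_(dl, 1) T (fun t => A *m t.1 + B *m t.2.1) (fun=> c)).
  by apply: (@continuousD R 'M[R]_(dl, 1)); apply: continuous_mulmx => //; exact: cst_continuous.
exact: cst_continuous.
Qed.

Lemma gv_continuous : continuous (fun q : 'cV[R]_dy * 'cV[R]_dl => G q.1 q.2).
Proof.
move=> q; apply: (continuous_comp (f := fun q : 'cV[R]_dy * 'cV[R]_dl => col_mx q.1 q.2)).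
  by apply: continuous_col_mx => -[? ?]; [exact: cvg_fst | exact: cvg_snd].
exact: g_cont.
Qed.

Lemma fv_bounded : exists M, forall x y l, X x -> Y y -> Lam l -> `|f x y l| <= M.
Proof.
have [M fM] := compact_continuous_bounded (compact_setX cX (compact_setX cY cLam)) fv_continuous.
by exists M => x y l Xx Yy Ll; exact: (fM (x, (y, l))).
Qed.

Lemma gv_bounded : exists N, forall y l, Y y -> Lam l -> `|G y l| <= N.
Proof.
have [N GN] := compact_continuous_bounded (compact_setX cY cLam) gv_continuous.
by exists N => y l Yy Ll; exact: (GN (y, l)).
Qed.

Lemma Pr_bounded rho : exists K,
  forall x y l z, X x -> Y y -> Lam l -> Y z -> `|Pr rho x y l z| <= K.
Proof.
have [M fM] := fv_bounded; have [N GN] := gv_bounded.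
exists (M + `|rho| * (N + N)) => x y l z Xx Yy Ll Yz.
apply: le_trans (ler_normB _ _) _; apply: lerD; first exact: fM.
rewrite normrM ler_wpM2l //.
by apply: le_trans (ler_normB _ _) _; apply: lerD; exact: GN.
Qed.

Lemma minz_le_Pr rho x y l z : X x -> Y y -> Lam l -> Y z ->
  minz rho x y l <= Pr rho x y l z.
Proof.
move=> Xx Yy Ll Yz; apply: ge_inf; last by exists z.
have [K PrK] := Pr_bounded rho.
by exists (- K) => _ [w Yw <-]; exact/lerNnormlW/PrK.
Qed.

Lemma le_minz rho x y l a : (forall z, Y z -> a <= Pr rho x y l z) -> a <= minz rho x y l.
Proof.
move=> aPr; apply: lb_le_inf; first by case: Y0 => z Yz; exists (Pr rho x y l z), z.
by move=> _ [z Yz <-]; exact: aPr.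
Qed.

Lemma minz_le_Frho rho x y l : X x -> Y y -> Lam l -> minz rho x y l <= Frho rho x.
Proof.
move=> Xx Yy Ll; apply: ub_le_sup; last by exists (y, l).
have [K PrK] := Pr_bounded rho.
exists K => _ [[y' l'] [/= Yy' Ll'] <-].
apply: le_trans _ (ler_normlW (PrK _ _ _ _ Xx Yy' Ll' Yy')); exact: minz_le_Pr.
Qed.

Lemma Phistar_le_Frho rho x : X x -> Phistar rho <= Frho rho x.
Proof.
move=> Xx; apply: ge_inf; last by exists x.
have [K PrK] := Pr_bounded rho.
exists (- K) => _ [x' Xx' <-]; case: Y0 => y Yy; case: Lam0 => l Ll.
apply: le_trans (minz_le_Frho _ _ _ _ Xx' Yy Ll); apply: le_minz => z Yz.
exact/lerNnormlW/PrK.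
Qed.

Lemma Flow_gv_le p z : Flow p -> Y z -> G p.1 p.2 <= G z p.2.
Proof.
move=> [Yp [Lp ->]] Yz; apply: ge_inf; last by exists z.
have [N GN] := gv_bounded.
by exists (- N) => _ [w Yw <-]; exact/lerNnormlW/GN.
Qed.

Lemma Flow_fv_le_minz rho x p : 0 <= rho -> Flow p -> f x p.1 p.2 <= minz rho x p.1 p.2.
Proof.
move=> rho_ge0 Fp; apply: le_minz => z Yz; rewrite /Pr.
suff : rho * (G p.1 p.2 - G z p.2) <= 0 by lra.
by rewrite mulr_ge0_le0 // subr_le0; exact: Flow_gv_le.
Qed.

Lemma fv_le_Phi x p : X x -> Flow p -> f x p.1 p.2 <= Phi x.
Proof.
move=> Xx Fp; apply: ub_le_sup; last by exists p.
have [M fM] := fv_bounded.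
by exists M => _ [[y l] [/= Yy [Ll _]] <-]; exact/ler_normlW/fM.
Qed.

Lemma Phi_le x a : Flow !=set0 -> (forall p, Flow p -> f x p.1 p.2 <= a) -> Phi x <= a.
Proof.
move=> [p Fp] fa; apply: ge_sup; first by exists (f x p.1 p.2), p.
by move=> _ [q Fq <-]; exact: fa.
Qed.

Lemma Flow_of_gap q : (Y `*` Lam) q ->
  (forall z, Y z -> forall e, 0 < e -> G q.1 q.2 - G z q.2 <= e) -> Flow q.
Proof.
move=> [Yq Lq] gap; split => //; split => //.
apply/eqP; rewrite eq_le; apply/andP; split.
  apply: lb_le_inf; first by case: Y0 => w Yw; exists (G w q.2), w.
  move=> _ [z Yz <-]; rewrite -subr_le0; apply/ler_addgt0Pr => e e0.
  by rewrite add0r; exact: gap.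
apply: ge_inf; last by exists q.1.
have [N GN] := gv_bounded.
by exists (- N) => _ [w Yw <-]; exact/lerNnormlW/GN.
Qed.

Lemma Flow_nonempty : Flow !=set0.
Proof.
case: Lam0 => l Ll.
have Gl_cont : {within Y, continuous (fun z => G z l)}.
  apply: continuous_subspaceT => z.
  have zl_cont : {for z, continuous (fun z : 'cV[R]_dy => (z, l))}.
    exact: (@cvg_pair _ _ _ (nbhs z) (nbhs z) (nbhs l) _ _ _ id (fun=> l) cvg_id (cvg_cst l)).
  exact: (continuous_comp zl_cont (gv_continuous (z, l))).
have [z /set_mem Yz zmin] := compact_EVT_min Y0 cY Gl_cont.
exists (z, l); apply: Flow_of_gap => // w Yw e e0.
by apply: le_trans (ltW e0); rewrite subr_le0; apply: zmin; exact/mem_set.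
Qed.

Lemma closed_gv_gap z e : closed [set q : 'cV[R]_dy * 'cV[R]_dl | G q.1 q.2 - G z q.2 <= e].
Proof.
have gap_cont : continuous (fun q : 'cV[R]_dy * 'cV[R]_dl => G q.1 q.2 - G z q.2).
  move=> q; apply: (@continuousB R R^o _ (fun q : 'cV[R]_dy * 'cV[R]_dl => G q.1 q.2));
    first exact: gv_continuous.
  have zq_cont : {for q, continuous (fun q : 'cV[R]_dy * 'cV[R]_dl => (z, q.2))}.
    have snd_cont : continuous (@snd 'cV[R]_dy 'cV[R]_dl) by move=> [? ?]; exact: cvg_snd.
    exact: (cvg_pair (cvg_cst z) (snd_cont q)).
  exact: (continuous_comp zq_cont (gv_continuous _)).
exact: (preimage_closed (fun q _ => gap_cont q) (@closed_le R e)).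
Qed.

Lemma closed_fv_ge x a : closed [set q : 'cV[R]_dy * 'cV[R]_dl | a <= f x q.1 q.2].
Proof.
have fx_cont : continuous (fun q : 'cV[R]_dy * 'cV[R]_dl => f x q.1 q.2).
  move=> q; have xq_cont : {for q, continuous (fun q : 'cV[R]_dy * 'cV[R]_dl => (x, q))}.
    exact: (cvg_pair (cvg_cst x) cvg_id).
  exact: (continuous_comp xq_cont (fv_continuous _)).
exact: (preimage_closed (fun q _ => fx_cont q) (@closed_ge R a)).
Qed.

Lemma cvg_fv (x : nat -> 'cV[R]_dx) (y : nat -> 'cV[R]_dy) (l : nat -> 'cV[R]_dl) x0 y0 l0 :
  x @ \oo --> x0 -> y @ \oo --> y0 -> l @ \oo --> l0 ->
  (fun k => f (x k) (y k) (l k)) @ \oo --> f x0 y0 l0.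
Proof.
move=> x_cvg y_cvg l_cvg.
apply: (@continuous2_cvg _ _ _ _ _ _ x (fun k => (y k, l k)) (fun x q => f x q.1 q.2) x0 (y0, l0)).
- exact: (fv_continuous (x0, (y0, l0))).
- exact: x_cvg.
- exact: (cvg_pair y_cvg l_cvg).
Qed.

Lemma cluster_penalty_Flow {rho : nat -> R} {q : nat -> 'cV[R]_dy * 'cV[R]_dl} {p} C :
  rho @ \oo --> +oo -> (Y `*` Lam) p -> cluster (q @ \oo) p ->
  (\forall k \near \oo, forall z, Y z -> rho k * (G (q k).1 (q k).2 - G z (q k).2) <= C) ->
  Flow p.
Proof.
move=> rho_oo Yp qp gapC; apply: Flow_of_gap => // z Yz e e0.
apply: (cluster_closed qp (closed_gv_gap z e)).
near=> k => /=.
have rho_big : (`|C| + 1) / e <= rho k by near: k; exact: (cvgryPge _).1 rho_oo _.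
have rho_pos : 0 < rho k by apply: lt_le_trans rho_big; rewrite divr_gt0 // ltr_wpDl.
rewrite ler_pdivrMr // in rho_big.
rewrite -(ler_pM2l rho_pos).
have : rho k * (G (q k).1 (q k).2 - G z (q k).2) <= C.
  by near: k; apply: filterS gapC => k /(_ z Yz).
have := ler_norm C; lra.
Unshelve. all: by end_near.
Qed.

Lemma Pr_diag rho x y l : Pr rho x y l y = f x y l.
Proof. by rewrite /Pr subrr mulr0 subr0. Qed.

Lemma eps_optimal_Pr_le_fv {rho eps x y l z} : eps_optimal rho eps x y l z ->
  Pr rho x y l z <= f x y l + eps.
Proof.
move=> [[Xx Yy Ll _] [opt_z _ _]].
by have := minz_le_Pr rho x y l y Xx Yy Ll Yy; rewrite Pr_diag; lra.
Qed.

Lemma eps_optimal_Flow_le_Pr {rho eps x y l z p} : 0 <= rho ->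
  eps_optimal rho eps x y l z -> Flow p -> f x p.1 p.2 <= Pr rho x y l z + eps.
Proof.
move=> rho_ge0 [[Xx _ _ _] [_ opt_yl _]] Fp; have [Yp [Lp _]] := Fp.
by have := Flow_fv_le_minz rho x p rho_ge0 Fp; have := minz_le_Frho rho x p.1 p.2 Xx Yp Lp; lra.
Qed.

Lemma eps_optimal_penalty {rho eps x y l z p w} : 0 <= rho ->
  eps_optimal rho eps x y l z -> Flow p -> Y w ->
  rho * (G y l - G w l) <= f x y l - f x p.1 p.2 + eps + eps.
Proof.
move=> rho_ge0 opt Fp Yw; have [[Xx Yy Ll _] [opt_z _ _]] := opt.
have := minz_le_Pr rho x y l w Xx Yy Ll Yw; have := eps_optimal_Flow_le_Pr rho_ge0 opt Fp.
by move: opt_z; rewrite /Pr; lra.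
Qed.

Lemma eps_optimal_Flow_le_Frho {rho eps x y l z p x'} : 0 <= rho ->
  eps_optimal rho eps x y l z -> Flow p -> X x' -> f x p.1 p.2 <= Frho rho x' + eps + eps.
Proof.
move=> rho_ge0 opt Fp Xx'; have [_ [_ _ opt_x]] := opt.
by have := eps_optimal_Flow_le_Pr rho_ge0 opt Fp; have := Phistar_le_Frho rho x' Xx'; lra.
Qed.

Lemma Frho_gt_penalty {rho x a} : X x -> a < Frho rho x ->
  exists q, [/\ (Y `*` Lam) q, a <= f x q.1 q.2 &
    forall z, Y z -> rho * (G q.1 q.2 - G z q.2) <= f x q.1 q.2 - a].
Proof.
move=> Xx aF; have : [set minz rho x p.1 p.2 | p in Y `*` Lam] !=set0.
  by case: Y0 => y Yy; case: Lam0 => l Ll; exists (minz rho x y l), (y, l).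
move=> /sup_gt /(_ aF) [_ [q [Yq Lq] <-] a_minz]; exists q; split => // [|z Yz].
  by have := minz_le_Pr rho x q.1 q.2 q.1 Xx Yq Lq Yq; rewrite Pr_diag; lra.
by have := minz_le_Pr rho x q.1 q.2 z Xx Yq Lq Yz; rewrite /Pr; lra.
Qed.

Lemma Frho_gt_near_Flow (rho : nat -> R) x a : X x -> rho @ \oo --> +oo ->
  (\forall k \near \oo, a < Frho (rho k) x) -> exists2 p, Flow p & a <= f x p.1 p.2.
Proof.
move=> Xx rho_oo Frho_gt.
pose good k (q : 'cV[R]_dy * 'cV[R]_dl) := [/\ (Y `*` Lam) q, a <= f x q.1 q.2 &
  forall z, Y z -> rho k * (G q.1 q.2 - G z q.2) <= f x q.1 q.2 - a].
have /choice [q qP] : forall k, exists q, a < Frho (rho k) x -> good k q.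
  move=> k; have [/(Frho_gt_penalty Xx) [q qP]|_] := boolP (a < Frho (rho k) x).
    by exists q.
  by exists (0, 0).
have q_good : \forall k \near \oo, good k (q k) by apply: filterS Frho_gt => k /qP.
have q_YLam : \forall k \near \oo, (Y `*` Lam) (q k) by apply: filterS q_good => k [].
have cYLam : compact (Y `*` Lam) := compact_setX cY cLam.
have [p [YLp qp]] := cYLam (q @ \oo) _ q_YLam.
exists p; last by apply: (cluster_closed qp (closed_fv_ge x a)); apply: filterS q_good => k [].
have [M fM] := fv_bounded.
apply: (cluster_penalty_Flow (M - a) rho_oo YLp qp); apply: filterS q_good.
move=> k [[Yq Lq] _ gap] z Yz; have := gap z Yz.
by have := ler_normlW (fM _ _ _ Xx Yq Lq); lra.
Qed.

Section EpsOptimalSequence.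
Variables (rho eps : nat -> R) (xk : nat -> 'cV[R]_dx) (yk : nat -> 'cV[R]_dy)
  (lk : nat -> 'cV[R]_dl) (zk : nat -> 'cV[R]_dy)
  (xinf : 'cV[R]_dx) (yinf : 'cV[R]_dy) (linf : 'cV[R]_dl).
Hypotheses (rho_ge0 : forall k, 0 <= rho k) (rho_oo : rho @ \oo --> +oo)
  (eps_0 : eps @ \oo --> 0)
  (opt : forall k, eps_optimal (rho k) (eps k) (xk k) (yk k) (lk k) (zk k))
  (xk_cvg : xk @ \oo --> xinf) (yk_cvg : yk @ \oo --> yinf) (lk_cvg : lk @ \oo --> linf).

Lemma limit_in_X : X xinf.
Proof. by apply: compact_cvg_mem (@norm_hausdorff R _) cX _ xk_cvg => k; case: (opt k) => -[]. Qed.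

Lemma limit_in_YLam : (Y `*` Lam) (yinf, linf).
Proof.
split; [apply: compact_cvg_mem (@norm_hausdorff R _) cY _ yk_cvg
       |apply: compact_cvg_mem (@norm_hausdorff R _) cLam _ lk_cvg];
  by move=> k; case: (opt k) => -[].
Qed.

Lemma limit_in_Flow : Flow (yinf, linf).
Proof.
have [M fM] := fv_bounded; have [p Fp] := Flow_nonempty; have [Yp [Lp _]] := Fp.
have ylk_cvg : (fun k => (yk k, lk k)) @ \oo --> (yinf, linf).
  exact: (cvg_pair yk_cvg lk_cvg).
apply: (cluster_penalty_Flow (M + M + 1 + 1) rho_oo limit_in_YLam (cvg_cluster_point ylk_cvg)).
near=> k => w Yw /=; have [[Xx Yy Ll _] _] := opt k.
have eps_le1 : eps k <= 1 by near: k; exact: (cvgr_le _ eps_0 _ ltr01).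
have := eps_optimal_penalty (rho_ge0 k) (opt k) Fp Yw.
have := lerNnormlW (fM _ _ _ Xx Yp Lp); have := ler_normlW (fM _ _ _ Xx Yy Ll); lra.
Unshelve. all: by end_near.
Qed.

Lemma limit_fv_max p : Flow p -> f xinf p.1 p.2 <= f xinf yinf linf.
Proof.
move=> Fp; have lim : (fun k => f (xk k) p.1 p.2 - f (xk k) (yk k) (lk k) - eps k - eps k)
    @ \oo --> f xinf p.1 p.2 - f xinf yinf linf - 0 - 0.
  by apply: cvgB => //; apply: cvgB => //; apply: cvgB; apply: cvg_fv => //; exact: cvg_cst.
rewrite !subr0 in lim; rewrite -subr_le0.
apply: (closed_cvg _ (@closed_le R 0) _ _ lim); apply: nearW => k /=.
by have := eps_optimal_Pr_le_fv (opt k); have := eps_optimal_Flow_le_Pr (rho_ge0 k) (opt k) Fp; lra.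
Qed.

Lemma limit_Frho_gt x a : X x -> a < f xinf yinf linf ->
  \forall k \near \oo, a < Frho (rho k) x.
Proof.
move=> Xx a_lt.
have lim : (fun k => f (xk k) yinf linf - eps k - eps k) @ \oo --> f xinf yinf linf - 0 - 0.
  by apply: cvgB => //; apply: cvgB => //; apply: cvg_fv => //; exact: cvg_cst.
rewrite !subr0 in lim; near=> k.
have := eps_optimal_Flow_le_Frho (rho_ge0 k) (opt k) limit_in_Flow Xx.
have : a < f (xk k) yinf linf - eps k - eps k by near: k; exact: (cvgr_gt _ lim _ a_lt).
by rewrite /=; lra.
Unshelve. all: by end_near.
Qed.

Lemma limit_fv_le_Phi x : X x -> f xinf yinf linf <= Phi x.
Proof.
move=> Xx; rewrite leNgt; apply/negP => /midf_lt[Phi_a a_lt].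
have [p Fp ap] := Frho_gt_near_Flow rho x _ Xx rho_oo (limit_Frho_gt x _ Xx a_lt).
by have := fv_le_Phi x p Xx Fp; lra.
Qed.

Lemma eps_optimal_limit_minimax :
  [/\ Flow (yinf, linf), X xinf /\ (forall x, X x -> Phi xinf <= Phi x) &
      forall p, Flow p -> f xinf p.1 p.2 <= f xinf yinf linf].
Proof.
split; [exact: limit_in_Flow | split; first exact: limit_in_X | exact: limit_fv_max].
move=> x Xx; apply: le_trans (limit_fv_le_Phi x Xx).
by apply: Phi_le; [exact: Flow_nonempty | exact: limit_fv_max].
Qed.

End EpsOptimalSequence.

End MinimaxBilevel.

Theorem mainTheorem3 (R : realType) (dx dy dl : nat)
  (X : set 'cV[R]_dx) (Y : set 'cV[R]_dy) (Lam : set 'cV[R]_dl)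
  (fbar : 'cV[R]_(dx + dy) -> R) (A : 'M[R]_(dl, dx)) (B : 'M[R]_(dl, dy))
  (c : 'cV[R]_dl) (g : 'cV[R]_(dy + dl) -> R)
  (rho eps : nat -> R)
  (xk : nat -> 'cV[R]_dx) (yk : nat -> 'cV[R]_dy) (lk : nat -> 'cV[R]_dl)
  (zk : nat -> 'cV[R]_dy)
  (xinf : 'cV[R]_dx) (yinf : 'cV[R]_dy) (linf : 'cV[R]_dl) :
  X !=set0 -> Y !=set0 -> Lam !=set0 ->
  convex_set X -> convex_set Y -> convex_set Lam ->
  compact X -> compact Y -> compact Lam ->
  C1_LipGrad_on fbar [set col_mx p.1 p.2 | p in X `*` Y] ->
  C1_LipGrad_on g [set col_mx p.1 p.2 | p in Y `*` Lam] ->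
  (forall l, Lam l -> forall a b (t : R), 0 <= t -> t <= 1 ->
     gv g ((1 - t) *: a + t *: b) l <= (1 - t) * gv g a l + t * gv g b l) ->
  (forall k, 0 < rho k) -> (forall k, 0 < eps k) ->
  rho @ \oo --> +oo -> eps @ \oo --> 0 ->
  (forall k, eps_optimal fbar A B c g X Y Lam (rho k) (eps k) (xk k) (yk k) (lk k) (zk k)) ->
  (* (xinf, yinf, linf) is an accumulation point of (xk, yk, lk) *)
  (exists phi : nat -> nat, {homo phi : m n / (m < n)%N >-> (m < n)%N} /\
     (xk \o phi) @ \oo --> xinf /\ (yk \o phi) @ \oo --> yinf /\
     (lk \o phi) @ \oo --> linf) ->
  [/\ Flow g Y Lam (yinf, linf),
      X xinf /\ (forall x, X x -> Phi fbar A B c g Y Lam xinf <= Phi fbar A B c g Y Lam x) &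
      forall p, Flow g Y Lam p ->
        fv fbar A B c xinf p.1 p.2 <= fv fbar A B c xinf yinf linf].
Proof.
move=> _ Y0 Lam0 _ _ _ cX cY cLam [fbar_diff _] [g_diff _] _ rho_gt0 _ rho_oo eps_0 opt.
move=> [phi [phi_incr [xk_cvg [yk_cvg lk_cvg]]]].
have fbar_cont : continuous fbar := fun p => differentiable_continuous (fbar_diff p).
have g_cont : continuous g := fun p => differentiable_continuous (g_diff p).
have phi_oo := increasing_nat_cvg _ phi_incr.
exact: (eps_optimal_limit_minimax _ _ _ _ _ _ _ _ Y0 Lam0 cX cY cLam fbar_cont g_cont
  (rho \o phi) (eps \o phi) _ _ _ (zk \o phi) _ _ _ (fun k => ltW (rho_gt0 (phi k)))
  (cvg_comp _ _ phi_oo rho_oo) (cvg_comp _ _ phi_oo eps_0) (fun k => opt (phi k))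
  xk_cvg yk_cvg lk_cvg).
Qed.
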